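(* Let $T$ be a tree, with all vertex capacities equal to $1$, given a rooted planar embedding whose root is a leaf, and let $E$ be the set of edges from each non-leaf vertex to its first child (in the planar order). Then the tree associated to $(T,E)$ has distributable capacity. Moreover, if $E'$ is any set of edges of $T$ with $E'\cap E=\emptyset$ and $U$ is a connected component of the forest obtained by deleting $E'$ from $T$, then the tree associated to $(U,E\cap E(U))$ also has distributable capacity.
   Context: For a tree $T$ with vertex capacities $\mathrm{cap}(v)$ and a subset $E$ of its edges, the tree associated to $(T,E)$ is the tree whose vertices are the connected components of the forest obtained from $T$ by deleting the edges in $E$, whose edges are the edges of $E$, and in which the capacity of a component is the sum of the capacities of its vertices. A tree with capacities has distributable capacity if every vertex $v$ satisfies $\mathrm{cap}(v)\ge\deg(v)-1$. *)

From mathcomp Require Import all_boot.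
Set Implicit Arguments. Unset Strict Implicit. Unset Printing Implicit Defensive.

Section Defs.
Variable V : finType.

Definition is_rooted_tree (r : V) (par : V -> V) : Prop :=
  par r = r /\ forall v : V, exists k : nat, iter k par v = r.

Definition tedges (r : V) (par : V -> V) : {set {set V}} :=
  [set [set v; par v] | v in [set v : V | v != r]].

Definition gdeg (F : {set {set V}}) (v : V) : nat := #|[set e in F | v \in e]|.

Definition children (r : V) (par : V -> V) (v : V) : {set V} :=
  [set c : V | (c != r) && (par c == v)].

(* The planar embedding (order of the children of each vertex) is encoded
   by an injective rank: the children of v are ordered by increasing rank. *)
Definition first_child (r : V) (par : V -> V) (rank : V -> nat) (v c : V) : bool :=
  (c \in children r par v) && [forall c' in children r par v, rank c <= rank c'].

(* E = edges from each non-leaf vertex (degree >= 2 in T) to its first child *)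
Definition first_child_edges (r : V) (par : V -> V) (rank : V -> nat)
  : {set {set V}} :=
  [set [set v; c] | v in [set v : V | 1 < gdeg (tedges r par) v],
                    c in [set c : V | first_child r par rank v c]].

Definition adj (F : {set {set V}}) : rel V := fun x y => [set x; y] \in F.

Definition comp_of (W : {set V}) (F : {set {set V}}) (x : V) : {set V} :=
  [set y in W | connect (adj F) x y].

Definition comps (W : {set V}) (F : {set {set V}}) : {set {set V}} :=
  [set comp_of W F x | x in W].

Definition induced_edges (F : {set {set V}}) (U : {set V}) : {set {set V}} :=
  [set e in F | e \subset U].

End Defs.

Record ctree (A : finType) := CTree {
  ct_verts : {set A};
  ct_edges : {set {set A}};
  ct_cap   : A -> nat }.

Definition ct_deg (A : finType) (G : ctree A) (v : A) : nat :=
  #|[set e in ct_edges G | v \in e]|.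

Definition distributable (A : finType) (G : ctree A) : Prop :=
  forall v, v \in ct_verts G -> ct_deg G v - 1 <= ct_cap G v.

Definition assoc_tree (V : finType) (W : {set V}) (F E : {set {set V}})
  (cap : V -> nat) : ctree {set V} :=
  CTree (comps W (F :\: E))
        [set (comp_of W (F :\: E)) @: e | e : {set V} in E]
        (fun C => \sum_(v in C) cap v).

(** With unit capacities a vertex [C] of the associated tree has capacity
    [#|C|], so it suffices that at most [#|C| + 1] edges of [E] meet the
    component [C].  Such an edge either joins some [v] in [C] to its first child
    (at most one per vertex of [C]), or joins a vertex [c] of [C] to its parent
    outside [C]; as [C] is connected through tree edges, every vertex of [C]
    descends from such a [c], so there is at most one of them. *)

From mathcomp Require Import all_boot.

Set Implicit Arguments.
Unset Strict Implicit.
Unset Printing Implicit Defensive.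

Section FirstChildForest.
Variable V : finType.
Variables (r : V) (par : V -> V) (rank : V -> nat).
Hypothesis par_tree : is_rooted_tree r par.
Hypothesis rank_inj : injective rank.

Lemma par_neq v : v != r -> par v != v.
Proof.
move=> vr; apply/eqP=> pv; case: par_tree => _ /(_ v) [k].
have -> : iter k par v = v by elim: k => //= k ->.
by move/eqP; rewrite (negbTE vr).
Qed.

Lemma tedge_parent y z : [set y; z] \in tedges r par ->
  (z = par y /\ y != r) \/ (y = par z /\ z != r).
Proof.
case/imsetP => v; rewrite inE => vr E.
have pv := par_neq vr.
have yv : y \in [set v; par v] by rewrite -E set21.
have zv : z \in [set v; par v] by rewrite -E set22.
have vyz : v \in [set y; z] by rewrite E set21.
have pyz : par v \in [set y; z] by rewrite E set22.
move: pyz vyz; case/set2P: yv => ->; case/set2P: zv => ->.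
- by move=> /set2P [] H; rewrite H eqxx in pv.
- by left.
- by right.
- by move=> _ /set2P [] H; rewrite -H eqxx in pv.
Qed.

Lemma first_child_uniq v c c' :
  first_child r par rank v c -> first_child r par rank v c' -> c = c'.
Proof.
move=> /andP [cv /forall_inP le_c] /andP [c'v /forall_inP le_c'].
by apply: rank_inj; apply/anti_leq; rewrite le_c // le_c'.
Qed.

Definition first_child_of v := odflt v [pick c | first_child r par rank v c].

Lemma first_child_ofE v c : first_child r par rank v c -> first_child_of v = c.
Proof.
rewrite /first_child_of; case: pickP => [c' fc' fc|/(_ c) -> //].
exact: first_child_uniq fc' fc.
Qed.

Definition tops (C : {set V}) := [set c in C | par c \notin C].

Lemma first_child_edge_meets (C : {set V}) e x :
  e \in first_child_edges r par rank -> x \in e -> x \in C ->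
  e \in [set [set v; first_child_of v] | v in C]
        :|: [set [set par c; c] | c in tops C].
Proof.
case/imset2P => v c; rewrite !inE => _ fc_vc -> xe xC.
have [vC | vNC] := boolP (v \in C).
  by apply/orP; left; apply/imsetP; exists v; rewrite ?(first_child_ofE fc_vc).
have pc : par c = v by case/andP: fc_vc => /[!inE] /andP [_ /eqP].
have cC : c \in C by case/set2P: xe => xv; [rewrite xv (negbTE vNC) in xC | rewrite -xv].
by apply/orP; right; apply/imsetP; exists c; rewrite ?inE ?cC ?pc.
Qed.

Section TreeSubgraph.
Variable F : {set {set V}}.
Hypothesis F_tree : F \subset tedges r par.

Lemma adjC : connect_sym (adj F).
Proof. by apply: sym_connect_sym => a b; rewrite /adj setUC. Qed.

Lemma connect_descendant c y :
  ~~ connect (adj F) c (par c) -> connect (adj F) c y ->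
  exists k, iter k par y = c /\ forall j, j <= k -> connect (adj F) c (iter j par y).
Proof.
move=> cNpc /connectP [p]; elim/last_ind: p y => [|p z IH] y.
  by move=> _ ->; exists 0; split=> // j; rewrite leqn0 => /eqP ->.
rewrite rcons_path last_rcons => /andP [cp wz] ->{y}.
have [k [iter_k conn_k]] := IH _ cp erefl.
move: (last c p) iter_k conn_k wz => w iter_k conn_k wz.
have cz : connect (adj F) c z := connect_trans (conn_k 0 isT) (connect1 wz).
case: (tedge_parent (subsetP F_tree _ wz)) => [[zpw _]|[wpz _]].
- case: k iter_k conn_k => [|k] iter_k conn_k.
    by rewrite /= in iter_k; rewrite zpw iter_k (negbTE cNpc) in cz.
  by exists k; split=> [|j jk]; rewrite zpw -iterSr //; apply: conn_k.
- exists k.+1; split; first by rewrite iterSr -wpz.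
  by case=> [|j] jk //; rewrite iterSr -wpz; apply: conn_k.
Qed.

Lemma top_uniq c1 c2 :
  connect (adj F) c1 c2 ->
  ~~ connect (adj F) c1 (par c1) -> ~~ connect (adj F) c2 (par c2) -> c1 = c2.
Proof.
move=> c12 c1N c2N; have [[|k] [iter_k conn_k]] := connect_descendant c1N c12.
  by [].
by move: (conn_k 1 isT) c2N => /= c1pc2; rewrite (connect_trans _ c1pc2) // adjC.
Qed.

Variable W : {set V}.
Hypothesis F_in_W : forall e, e \in F -> e \subset W.

Lemma mem_comp_of x y : x \in W -> (y \in comp_of W F x) = connect (adj F) x y.
Proof.
rewrite inE => xW; apply/andP/idP=> [[] // | xy]; split=> //.
case/connectP: xy => p; elim/last_ind: p => [_ -> //|p z _].
rewrite rcons_path last_rcons => /andP [_ wz] ->.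
exact: subsetP (F_in_W wz) _ (set22 _ _).
Qed.

Lemma card_tops_comp x : x \in W -> #|tops (comp_of W F x)| <= 1.
Proof.
move=> xW; apply/card_le1_eqP => c1 c2 /setIdP [+ +] /setIdP [+ +].
rewrite !mem_comp_of //.
have noexit c : connect (adj F) x c -> ~~ connect (adj F) x (par c) ->
    ~~ connect (adj F) c (par c).
  by move=> xc; apply: contra; apply: connect_trans.
move=> xc1 /(noexit _ xc1) c1N xc2 /(noexit _ xc2) c2N.
by apply: (top_uniq _ c2N c1N); apply: connect_trans xc1; rewrite adjC.
Qed.

End TreeSubgraph.

Lemma distributable_assoc_first_child (W : {set V}) (Fg Eg : {set {set V}}) :
  Fg \subset tedges r par -> Eg \subset first_child_edges r par rank ->
  (forall e, e \in Fg -> e \subset W) -> (forall e, e \in Eg -> e \subset W) ->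
  distributable (assoc_tree W Fg Eg (fun _ => 1)).
Proof.
move=> Fg_tree Eg_fc Fg_W Eg_W _ /imsetP [x xW ->].
set F := Fg :\: Eg; set C := comp_of W F x; set comp := comp_of W F.
have F_tree : F \subset tedges r par := subset_trans (subsetDl _ _) Fg_tree.
have F_W e : e \in F -> e \subset W by case/setDP=> /Fg_W.
pose S := [set e in Eg | C \in comp @: e].
have deg_S : ct_deg (assoc_tree W Fg Eg (fun _ => 1)) C <= #|S|.
  apply: leq_trans (leq_imset_card (fun e : {set V} => comp @: e) S).
  rewrite /ct_deg /=; apply: subset_leq_card.
  apply/subsetP => _ /[!inE] /andP [/imsetP [e eE ->] Ce].
  by apply/imsetP; exists e; rewrite // inE eE.
have S_sub : S \subset [set [set v; first_child_of v] | v in C]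
                       :|: [set [set par c; c] | c in tops C].
  apply/subsetP => e /setIdP [eE /imsetP [y ye Cy]].
  apply: (first_child_edge_meets (subsetP Eg_fc _ eE) ye).
  by rewrite Cy inE (subsetP (Eg_W _ eE)) ?connect0.
rewrite /= sum1_card leq_subLR; apply: (leq_trans deg_S).
apply: leq_trans (subset_leq_card S_sub) _; apply: leq_trans (leq_card_setU _ _) _.
rewrite addnC; apply: leq_add; last exact: leq_imset_card.
exact: leq_trans (leq_imset_card _ _) (card_tops_comp F_tree F_W xW).
Qed.

End FirstChildForest.

Theorem mainTheorem5 (V : finType) (r : V) (par : V -> V) (rank : V -> nat) :
  is_rooted_tree r par ->
  injective rank ->
  gdeg (tedges r par) r = 1 ->
  distributable
    (assoc_tree [set: V] (tedges r par) (first_child_edges r par rank)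
                (fun _ => 1)) /\
  (forall (E' : {set {set V}}) (U : {set V}),
     E' \subset tedges r par ->
     [disjoint E' & first_child_edges r par rank] ->
     U \in comps [set: V] (tedges r par :\: E') ->
     distributable
       (assoc_tree U (induced_edges (tedges r par) U)
          (first_child_edges r par rank :&: induced_edges (tedges r par) U)
          (fun _ => 1))).
Proof.
move=> par_tree rank_inj _; split.
  by apply: (distributable_assoc_first_child par_tree rank_inj) => // e _; apply: subsetT.
move=> E' U _ _ _; apply: (distributable_assoc_first_child par_tree rank_inj) => //.
- by apply/subsetP => e /[!inE] /andP [].
- exact: subsetIl.
- by move=> e /[!inE] /andP [].
- by move=> e /[!inE] /andP [_ /andP []].
Qed.
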